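(* Let $p>1$ be an integer and let $u^{(p)}$ be the fixed point of the substitution $\varphi_p(L)=L^pS$, $\varphi_p(S)=M$, $\varphi_p(M)=L^{p-1}S$. For each $n\in\mathbb N$ there are numbers $s_n,m_n\in\mathbb N$ such that $\mathcal P_u(n)\subset\{\Psi^{(n)}_1,\dots,\Psi^{(n)}_9\}$, where $\Psi^{(n)}_1=(n-s_n-m_n+2,\ s_n-1,\ m_n-1)$, $\Psi^{(n)}_2=(n-s_n-m_n+1,\ s_n-1,\ m_n)$, $\Psi^{(n)}_3=(n-s_n-m_n,\ s_n-1,\ m_n+1)$, $\Psi^{(n)}_4=(n-s_n-m_n+1,\ s_n,\ m_n-1)$, $\Psi^{(n)}_5=(n-s_n-m_n,\ s_n,\ m_n)$, $\Psi^{(n)}_6=(n-s_n-m_n-1,\ s_n,\ m_n+1)$, $\Psi^{(n)}_7=(n-s_n-m_n,\ s_n+1,\ m_n-1)$, $\Psi^{(n)}_8=(n-s_n-m_n-1,\ s_n+1,\ m_n)$, $\Psi^{(n)}_9=(n-s_n-m_n-2,\ s_n+1,\ m_n+1)$. Consequently $\mathrm{AC}(n)\le 9$.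
   Context: $u^{(p)}=\lim_{n\to\infty}\varphi_p^n(L)$ is the unique infinite word over $\{L,S,M\}$ fixed by $\varphi_p$. For a finite word $w$, its Parikh vector is $\Psi(w)=(|w|_L,|w|_S,|w|_M)$, where $|w|_a$ is the number of occurrences of $a$ in $w$. $\mathcal P_u(n)$ denotes the set of Parikh vectors of all factors of $u^{(p)}$ of length $n$, and the Abelian complexity is $\mathrm{AC}(n)=\#\mathcal P_u(n)$. *)

From mathcomp Require Import all_boot all_algebra.
Set Implicit Arguments. Unset Strict Implicit. Unset Printing Implicit Defensive.

Inductive letter := L | S | M.

Definition phi_letter (p : nat) (a : letter) : seq letter :=
  match a with
  | L => rcons (nseq p L) S
  | S => [:: M]
  | M => rcons (nseq p.-1 L) S
  end.

Definition phi (p : nat) (w : seq letter) : seq letter :=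
  flatten (map (phi_letter p) w).

(* u^(p) = lim phi_p^n(L): the i-th letter is read in phi_p^(i+1)(L), which
   has length > i and is a prefix of all further iterates *)
Definition u (p : nat) (i : nat) : letter :=
  nth L (iter i.+1 (phi p) [:: L]) i.

Definition factor (p i n : nat) : seq letter := mkseq (fun k => u p (i + k)) n.

Definition isL (a : letter) : bool := if a is L then true else false.
Definition isS (a : letter) : bool := if a is S then true else false.
Definition isM (a : letter) : bool := if a is M then true else false.

Definition parikh (w : seq letter) : int * int * int :=
  (Posz (count isL w), Posz (count isS w), Posz (count isM w)).

Definition Pu (p n : nat) (v : int * int * int) : Prop :=
  exists i, parikh (factor p i n) = v.

(* #A <= k for a (Prop) set A : A is covered by a list of at most k elements *)
Definition card_le (T : eqType) (A : T -> Prop) (k : nat) : Prop :=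
  exists s : seq T, (size s <= k)%N /\ forall x, A x -> x \in s.

Local Open Scope ring_scope.

Definition Psi_list (n s m : nat) : seq (int * int * int) :=
  let N := Posz n in let s := Posz s in let m := Posz m in
  [:: (N - s - m + 2, s - 1, m - 1);
      (N - s - m + 1, s - 1, m);
      (N - s - m,     s - 1, m + 1);
      (N - s - m + 1, s,     m - 1);
      (N - s - m,     s,     m);
      (N - s - m - 1, s,     m + 1);
      (N - s - m,     s + 1, m - 1);
      (N - s - m - 1, s + 1, m);
      (N - s - m - 2, s + 1, m + 1)].

(* The S-counts of factors of u of the same length differ by at most 2, and so do the
   M-counts; the counts therefore lie in windows {s-1, s, s+1} and {m-1, m, m+1}, which
   gives the nine vectors.

   Compare two factors w, w' whose lengths differ by at most 4 through their state: the
   differences of their lengths, S-counts and M-counts, their first letters and the letters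
   following them. Every image phi_p(a) is a run of L's closed by one other letter, so w is
   phi_p(v) for a factor v of u, with a run of L's cut at the front and a run of L's added at
   the back. Hence the state of (w, w') is an explicit function of the state of the shorter
   pair (v, v') and of the cut positions, which range over intervals linear in p. The states
   reachable from pairs of factors of length at most 2 are computed exhaustively, once for
   p = 2 and once uniformly for all p >= 3; they stay bounded, they never allow |v| - |v'| > 4
   while |w| - |w'| <= 4, and their count differences are at most 2 when the lengths agree. *)

From Stdlib Require Import ZArith MSetPositive Classical.
From HB Require Import structures.
From mathcomp Require Import all_boot all_algebra zify ssrZ.

Set Implicit Arguments. Unset Strict Implicit. Unset Printing Implicit Defensive.

Definition letter_index (a : letter) : nat := match a with L => 0 | S => 1 | M => 2 end.

Lemma letter_index_inj : injective letter_index.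
Proof. by case; case. Qed.

HB.instance Definition _ := hasDecEq.Build letter (inj_eqAxiom letter_index_inj).

Lemma all_flatten_map (T T' : Type) (P : pred T') (f : T -> seq T') (s : seq T) :
  all P (flatten (map f s)) = all (fun x => all P (f x)) s.
Proof. by elim: s => //= x s IH; rewrite all_cat IH. Qed.

Lemma nth_rcons_nseq (T : Type) (x0 x : T) m r :
  r <= m -> nth x0 (rcons (nseq m x0) x) r = if r == m then x else x0.
Proof. by rewrite nth_rcons size_nseq nth_nseq; case: ltngtP. Qed.

Section Factors.
Variable p : nat.

Lemma size_factor i n : size (factor p i n) = n.
Proof. exact: size_mkseq. Qed.

Lemma nth_factor i n k : k < n -> nth L (factor p i n) k = u p (i + k).
Proof. exact: nth_mkseq. Qed.

Lemma factor_cat i m n : factor p i (m + n) = factor p i m ++ factor p (i + m) n.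
Proof.
rewrite /factor /mkseq iotaD map_cat add0n -{2}(addn0 m) iotaDl -map_comp.
by congr (_ ++ _); apply: eq_map => k /=; rewrite addnA.
Qed.

Lemma factor1 i : factor p i 1 = [:: u p i].
Proof. by rewrite /factor /mkseq /= addn0. Qed.

Lemma factor_cons i n : factor p i n.+1 = u p i :: factor p i.+1 n.
Proof. by rewrite -add1n factor_cat factor1 addn1. Qed.

Lemma factor_take i m n : m <= n -> factor p i m = take m (factor p i n).
Proof. by move/subnKC <-; rewrite factor_cat take_size_cat ?size_factor. Qed.

End Factors.

Section Substitution.
Variable p : nat.
Hypothesis p_gt0 : 0 < p.

Lemma phi_cat s1 s2 : phi p (s1 ++ s2) = phi p s1 ++ phi p s2.
Proof. by rewrite /phi map_cat flatten_cat. Qed.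

Lemma phi_cons a s : phi p (a :: s) = phi_letter p a ++ phi p s.
Proof. by []. Qed.

Lemma phi_seq1 a : phi p [:: a] = phi_letter p a.
Proof. exact: cats0. Qed.

Lemma size_phi_letter a :
  size (phi_letter p a) = match a with L => p.+1 | S => 1 | M => p end.
Proof. by case: a => //=; rewrite size_rcons size_nseq // prednK. Qed.

Lemma size_phi_letter_gt0 a : 0 < size (phi_letter p a).
Proof. by rewrite size_phi_letter; case: a. Qed.

Lemma phi_letter_rcons a :
  phi_letter p a = rcons (nseq (size (phi_letter p a)).-1 L) (if a is S then M else S).
Proof. by case: a => //=; rewrite size_rcons size_nseq. Qed.

Lemma nth_phi_letter a r : r < size (phi_letter p a) ->
  nth L (phi_letter p a) r = if r.+1 == size (phi_letter p a) then (if a is S then M else S) else L.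
Proof.
rewrite -(prednK (size_phi_letter_gt0 a)) ltnS eqSS => hr.
by rewrite {1}phi_letter_rcons nth_rcons_nseq.
Qed.

Lemma take_phi_letter a r : r < size (phi_letter p a) -> take r (phi_letter p a) = nseq r L.
Proof.
rewrite -(prednK (size_phi_letter_gt0 a)) ltnS => hr.
by rewrite phi_letter_rcons -cats1 takel_cat ?size_nseq // take_nseq.
Qed.

Lemma leq_size_phi s : size s <= size (phi p s).
Proof. by elim: s => //= a s IH; rewrite phi_cons size_cat -add1n leq_add ?size_phi_letter_gt0. Qed.

Definition iterL k := iter k (phi p) [:: L].

Lemma iterL_prefixS k : exists s, iterL k.+1 = iterL k ++ s.
Proof.
elim: k => [|k [s IH]].
  by exists (rcons (nseq p.-1 L) S); rewrite /iterL /= phi_seq1 /= -{1}(prednK p_gt0).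
by exists (phi p s); rewrite [iterL k.+2]/iterL iterS -/(iterL k.+1) {1}IH phi_cat.
Qed.

Lemma iterL_prefix k k' : k <= k' -> exists s, iterL k' = iterL k ++ s.
Proof.
move/subnKC <-; elim: (k' - k) => [|d [s IH]]; first by exists [::]; rewrite addn0 cats0.
have [s' E] := iterL_prefixS (k + d).
by exists (s ++ s'); rewrite addnS E IH catA.
Qed.

Lemma size_iterL k : k < size (iterL k).
Proof.
elim: k => // k IH; have [s Es] := iterL_prefix (leq0n k).
rewrite /iterL iterS -/(iterL k) Es /= phi_cons size_cat size_phi_letter.
by move: IH; rewrite Es /=; have := leq_size_phi s; lia.
Qed.

Lemma nth_iterL k i : i < size (iterL k) -> nth L (iterL k) i = u p i.
Proof.
move=> hi; rewrite /u -/(iterL i.+1).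
have [s1 E1] := iterL_prefix (leq_maxl k i.+1).
have [s2 E2] := iterL_prefix (leq_maxr k i.+1).
have hi' : i < size (iterL i.+1) by apply: ltn_trans (size_iterL i.+1).
by have := nth_cat L (iterL k) s1 i; rewrite hi -E1 E2 nth_cat hi' => <-.
Qed.

Lemma factor_iterL k : factor p 0 (size (iterL k)) = iterL k.
Proof.
apply: (@eq_from_nth _ L); rewrite size_factor // => i hi.
by rewrite nth_factor // nth_iterL.
Qed.

(* As u is a fixed point of phi_p, the image of u_j starts at this position of u. *)
Definition image_pos j := size (phi p (factor p 0 j)).

Lemma factor0_image_pos j : factor p 0 (image_pos j) = phi p (factor p 0 j).
Proof.
have hj : j <= size (iterL j) by apply: ltnW (size_iterL j).
have E : iterL j.+1 = phi p (take j (iterL j)) ++ phi p (drop j (iterL j)).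
  by rewrite -phi_cat cat_take_drop.
rewrite /image_pos (factor_take _ _ hj) factor_iterL.
rewrite (factor_take _ _ (n := size (iterL j.+1))); last by rewrite E size_cat leq_addr.
by rewrite factor_iterL E take_size_cat.
Qed.

Lemma image_pos_add j m : image_pos (j + m) = image_pos j + size (phi p (factor p j m)).
Proof. by rewrite /image_pos factor_cat phi_cat size_cat add0n. Qed.

Lemma image_posS j : image_pos j.+1 = image_pos j + size (phi_letter p (u p j)).
Proof. by rewrite -addn1 image_pos_add factor1 phi_seq1. Qed.

Lemma factor_image_pos j m :
  factor p (image_pos j) (size (phi p (factor p j m))) = phi p (factor p j m).
Proof.
have := factor0_image_pos (j + m); rewrite image_pos_add factor_cat add0n.
rewrite factor0_image_pos factor_cat phi_cat add0n.
by move/(congr1 (drop (size (phi p (factor p 0 j))))); rewrite !drop_size_cat.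
Qed.

Lemma factor_image_pos_nseq j r : r < size (phi_letter p (u p j)) ->
  factor p (image_pos j) r = nseq r L.
Proof.
move=> hr; rewrite -(take_phi_letter hr) (factor_take _ _ (ltnW hr)).
by have := factor_image_pos j 1; rewrite factor1 phi_seq1 => ->.
Qed.

Lemma u_image_pos j r : r < size (phi_letter p (u p j)) ->
  u p (image_pos j + r) = nth L (phi_letter p (u p j)) r.
Proof.
move=> hr; rewrite -(nth_factor _ _ hr).
by have := factor_image_pos j 1; rewrite factor1 phi_seq1 => ->.
Qed.

Lemma image_pos_decomp i : exists j r, i = image_pos j + r /\ r < size (phi_letter p (u p j)).
Proof.
elim: i => [|i [j [r [-> hr]]]].
  by exists 0, 0; rewrite addn0; split; [|exact: size_phi_letter_gt0].
case: (ltngtP r.+1 (size (phi_letter p (u p j)))) => [h | | h].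
- by exists j, r.+1; rewrite addnS.
- by rewrite ltnNge hr.
- exists j.+1, 0; rewrite image_posS addn0 -h addnS; split => //.
  exact: size_phi_letter_gt0.
Qed.

Lemma leq_image_pos j j' : j <= j' -> image_pos j <= image_pos j'.
Proof. by move/subnKC <-; rewrite image_pos_add leq_addr. Qed.

Lemma u0 : u p 0 = L.
Proof. by rewrite -(nth_iterL (k := 0)). Qed.

Lemma image_pos_gt j : 0 < j -> j < image_pos j.
Proof.
elim: j => // -[_ _|j IH _]; rewrite image_posS.
  by rewrite u0 size_phi_letter addnS ltnS addn_gt0 p_gt0 orbT.
by have := IH isT; have := size_phi_letter_gt0 (u p j.+1); lia.
Qed.

End Substitution.

Definition admissible (a b : letter) : bool :=
  match a, b with L, L | L, S | S, L | S, M | M, L => true | _, _ => false end.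

Section Desubstitution.
Variable p : nat.
Hypothesis p_gt1 : 1 < p.
Let p_gt0 : 0 < p := ltnW p_gt1.

Lemma nth_phi_letter0 a : nth L (phi_letter p a) 0 = if a is S then M else L.
Proof.
rewrite (nth_phi_letter p_gt0 (size_phi_letter_gt0 p_gt0 a)) size_phi_letter //.
by case: a; case: (p) p_gt1 => [|[]].
Qed.

Lemma admissible_u i : admissible (u p i) (u p i.+1).
Proof.
elim/ltn_ind: i => i IH; have [j [r [Ei hr]]] := image_pos_decomp p_gt0 i.
rewrite Ei (u_image_pos p_gt0 hr) -addnS (nth_phi_letter p_gt0 hr).
case: (ltngtP r.+1 (size (phi_letter p (u p j)))) => [hr1|hr1|hr1].
- rewrite (u_image_pos p_gt0 hr1) (nth_phi_letter p_gt0 hr1).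
  by move: hr1; rewrite size_phi_letter; case: (u p j) => //; case: eqP.
- by move: hr1; rewrite ltnS leqNgt hr.
rewrite hr1 -image_posS -[image_pos _ _]addn0 (u_image_pos p_gt0 (size_phi_letter_gt0 p_gt0 _)).
rewrite nth_phi_letter0; case Ej: (u p j); case Ej1: (u p j.+1) => //.
have j_gt0 : 0 < j by case: j Ei Ej {IH hr hr1 Ej1} => //; rewrite u0.
have := IH j; rewrite Ej Ej1; apply.
by rewrite Ei; have := image_pos_gt p_gt0 j_gt0; lia.
Qed.

Lemma sorted_admissible_factor i n : sorted admissible (factor p i n).
Proof.
case: n => // n; rewrite factor_cons /=.
by elim: n i => // n IH i; rewrite factor_cons /= admissible_u IH.
Qed.

Lemma count_S_phi s : count isS (phi p s) + count isS s = size s.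
Proof.
elim: s => //= a s IH; rewrite phi_cons count_cat phi_letter_rcons -cats1 count_cat count_nseq.
by case: a => /=; lia.
Qed.

Lemma count_M_phi s : count isM (phi p s) = count isS s.
Proof.
elim: s => //= a s IH; rewrite phi_cons count_cat phi_letter_rcons -cats1 count_cat count_nseq.
by case: a => /=; lia.
Qed.

Lemma size_phi s : size (phi p s) + p * count isS s + count isM s = p.+1 * size s.
Proof.
elim: s => [|a s IH /=]; first by rewrite /= !muln0.
rewrite phi_cons size_cat (size_phi_letter p_gt0).
by case: a => /=; lia.
Qed.

Lemma size_phi_nonS s : size s + count (predC isS) s <= size (phi p s).
Proof.
elim: s => //= a s IH; rewrite phi_cons size_cat (size_phi_letter p_gt0).
by case: a => /=; lia.
Qed.

(* u[i, i+n) is phi_p(u[j, j+m)) without its first r letters and followed by the first t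
   letters of the image of u_(j+m); both are runs of L's. *)
Definition desubst (i n j m r t : nat) : Prop :=
  [/\ i = image_pos p j + r, r < size (phi_letter p (u p j)),
      i + n = image_pos p (j + m) + t & t < size (phi_letter p (u p (j + m)))].

Lemma desubst_exists i n : exists j m r t, desubst i n j m r t.
Proof.
have [j [r [Ei hr]]] := image_pos_decomp p_gt0 i.
have [j' [t [Ein ht]]] := image_pos_decomp p_gt0 (i + n).
have hjj' : j <= j'.
  rewrite leqNgt; apply/negP => /(leq_image_pos p) hlt.
  by move: hlt; rewrite image_posS; lia.
by exists j, (j' - j), r, t; rewrite /desubst subnKC.
Qed.

Section Window.
Variables i n j m r t : nat.
Hypothesis dsb : desubst i n j m r t.

Lemma desubst_size : r + n = size (phi p (factor p j m)) + t.
Proof. by case: dsb => Ei _; rewrite image_pos_add Ei; lia. Qed.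

Lemma desubst_factor : nseq r L ++ factor p i n = phi p (factor p j m) ++ nseq t L.
Proof.
case: dsb => Ei hr Ein ht.
rewrite -(factor_image_pos_nseq p_gt0 hr) -(factor_image_pos_nseq p_gt0 ht) Ei -factor_cat.
by rewrite desubst_size factor_cat (factor_image_pos p_gt0) (image_pos_add p j m).
Qed.

Lemma desubst_count (P : pred letter) :
  ~~ P L -> count P (factor p i n) = count P (phi p (factor p j m)).
Proof.
move=> PL; have := congr1 (count P) desubst_factor.
by rewrite !count_cat !count_nseq (negbTE PL) mul0n add0n addn0.
Qed.

Lemma desubst_head : u p i = nth L (phi_letter p (u p j)) r.
Proof. by case: dsb => -> hr _ _; rewrite u_image_pos. Qed.

Lemma desubst_next : u p (i + n) = nth L (phi_letter p (u p (j + m))) t.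
Proof. by case: dsb => _ _ -> ht; rewrite u_image_pos. Qed.

(* Every factor of length 2 contains a letter whose image has length >= 2. *)
Lemma desubst_shorter : m <= n /\ (2 < n -> m < n).
Proof.
have Esize := desubst_size; case: dsb => _ hr _ _.
case: m Esize => [|m1]; first by split => //; lia.
rewrite factor_cons phi_cons size_cat => Esize.
have := size_phi_nonS (factor p j.+1 m1); rewrite size_factor => Hns.
split; first lia.
move=> n_gt2; case: m1 Esize Hns => [|[|m2]] Esize Hns; try lia.
suff : 0 < count (predC isS) (factor p j.+1 m2.+2) by lia.
rewrite !factor_cons /=; have := admissible_u j.+1.
by case: (u p j.+1); case: (u p j.+2).
Qed.

End Window.

Lemma size_phi_factor_lt j m1 m : m1 < m ->
  size (phi p (factor p j m1)) + size (phi_letter p (u p (j + m1))) <= size (phi p (factor p j m)).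
Proof.
move=> /subnKC <-; rewrite addSnnS factor_cat phi_cat size_cat leq_add2l.
by rewrite factor_cons phi_cons size_cat leq_addr.
Qed.

End Desubstitution.

Local Open Scope Z_scope.

Record state := State {
  len_diff : Z; S_diff : Z; M_diff : Z;
  head1 : letter; next1 : letter; head2 : letter; next2 : letter }.

Definition state_of (p i n i' n' : nat) : state :=
  State (Z.of_nat n - Z.of_nat n')
        (Z.of_nat (count isS (factor p i n)) - Z.of_nat (count isS (factor p i' n')))
        (Z.of_nat (count isM (factor p i n)) - Z.of_nat (count isM (factor p i' n')))
        (u p i) (u p (i + n)%N) (u p i') (u p (i' + n')%N).

Definition lin (c : Z * Z) (q : Z) : Z := c.1 + c.2 * q.

Definition shift (c a b a' b' : Z * Z) : Z * Z :=
  (c.1 - a.1 + b.1 + a'.1 - b'.1, c.2 - a.2 + b.2 + a'.2 - b'.2).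

Lemma lin_shift c a b a' b' q :
  lin (shift c a b a' b') q = lin c q - lin a q + lin b q + lin a' q - lin b' q.
Proof. by rewrite /lin /=; lia. Qed.

Definition next_state (p : nat) (st : state) (r t r' t' : nat) : state :=
  let: State k dS dM a b a' b' := st in
  State (lin (k - dM, k - dS) (Z.of_nat p) - Z.of_nat r + Z.of_nat t + Z.of_nat r' - Z.of_nat t')
        (k - dS) dS
        (nth L (phi_letter p a) r) (nth L (phi_letter p b) t)
        (nth L (phi_letter p a') r') (nth L (phi_letter p b') t').

Lemma state_of_desubst (p i n j m r t i' n' j' m' r' t' : nat) : (1 < p)%N ->
  desubst p i n j m r t -> desubst p i' n' j' m' r' t' ->
  state_of p i n i' n' = next_state p (state_of p j m j' m') r t r' t'.
Proof.
move=> p_gt1 d d'; rewrite /state_of /next_state /lin /=.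
have := desubst_size p_gt1 d; have := desubst_size p_gt1 d'.
have := size_phi p_gt1 (factor p j m); have := size_phi p_gt1 (factor p j' m').
have := count_S_phi p_gt1 (factor p j m); have := count_S_phi p_gt1 (factor p j' m').
rewrite !(desubst_count p_gt1 d) // !(desubst_count p_gt1 d') // !count_M_phi // !size_factor.
rewrite (desubst_head p_gt1 d) (desubst_next p_gt1 d).
rewrite (desubst_head p_gt1 d') (desubst_next p_gt1 d').
by move=> *; congr State; lia.
Qed.

Record block := Block { block_letter : letter; block_lo : Z * Z; block_hi : Z * Z }.

(* The constant blocks of phi_p(a), with their ranges of positions as linear forms in p. *)
Definition blocks (a : letter) : seq block :=
  match a with
  | L => [:: Block L (0, 0) (-1, 1); Block S (0, 1) (0, 1)]
  | S => [:: Block M (0, 0) (0, 0)]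
  | M => [:: Block L (0, 0) (-2, 1); Block S (-1, 1) (-1, 1)]
  end.

Lemma block_of (p : nat) a r (P : pred block) : (1 < p)%N -> (r < size (phi_letter p a))%N ->
  all P (blocks a) -> exists c, [/\ P c, nth L (phi_letter p a) r = block_letter c &
    lin (block_lo c) (Z.of_nat p) <= Z.of_nat r <= lin (block_hi c) (Z.of_nat p)].
Proof.
move=> p_gt1 hr; have p_gt0 := ltnW p_gt1.
rewrite (nth_phi_letter p_gt0 hr); move: hr; rewrite (size_phi_letter p_gt0) /lin.
case: a => /= hr.
- case/and3P=> P1 P2 _; case: ifP => E;
    [exists (Block S (0, 1) (0, 1)) | exists (Block L (0, 0) (-1, 1))];
  by split => //; cbn [block_lo block_hi fst snd]; lia.
- case: r hr => // _ /andP[P1 _]; exists (Block M (0, 0) (0, 0)).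
  by split => //; cbn [block_lo block_hi fst snd]; lia.
- case/and3P=> P1 P2 _; case: ifP => E;
    [exists (Block S (-1, 1) (-1, 1)) | exists (Block L (0, 0) (-2, 1))];
  by split => //; cbn [block_lo block_hi fst snd]; lia.
Qed.

(* The range fam_lo <= p <= fam_hi of parameters (unbounded if [fam_hi = None]) handled by
   one certificate. *)
Record family := Family { fam_lo : Z; fam_hi : option Z }.

Definition in_family (fam : family) (q : Z) : Prop :=
  0 <= fam_lo fam <= q /\ (if fam_hi fam is Some h then q <= h else True).

Definition irange (lo hi : Z) : seq Z :=
  [seq lo + Z.of_nat k | k <- iota 0 (Z.to_nat (hi - lo + 1))].

Lemma mem_irange lo hi x : lo <= x <= hi -> x \in irange lo hi.
Proof. by move=> hx; apply/mapP; exists (Z.to_nat (x - lo)); [rewrite mem_iota|]; lia. Qed.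

(* If some q of the family satisfies the constraint, then so does Z.min q cap. *)
Definition admits (fam : family) (A B : Z * Z) (K : Z) : bool :=
  let cap := fam_lo fam + Z.abs (K - A.1) + Z.abs (B.1 - K) in
  has (fun q => (lin A q <=? K) && (K <=? lin B q))
      (irange (fam_lo fam) (if fam_hi fam is Some h then Z.min h cap else cap)).

Lemma admitsP fam q A B K : in_family fam q -> lin A q <= K <= lin B q -> admits fam A B K.
Proof.
case=> [[lo_ge0 lo_le] le_hi]; case: A B => [a0 a1] [b0 b1]; rewrite /admits /lin /= => hK.
set cap := _ + _ + _; apply/hasP.
have [q_le | cap_lt] := Z.le_gt_cases q cap.
  by exists q; [apply: mem_irange; case: (fam_hi fam) le_hi => [h|] /=; lia | lia].
exists cap; first by apply: mem_irange; case: (fam_hi fam) le_hi => [h|] /=; lia.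
have [capA capB] : Z.abs (K - a0) <= cap /\ Z.abs (b0 - K) <= cap by rewrite /cap; lia.
have [a1_s|a1_s] := Z.le_gt_cases 0 a1; have [b1_s|b1_s] := Z.le_gt_cases b1 0; nia.
Qed.

Definition exceeds4 (fam : family) (C : Z * Z) : bool :=
  (4 <? lin C (fam_lo fam)) && (if fam_hi fam is Some h then 4 <? lin C h else 0 <=? C.2).

Lemma exceeds4P fam q C : in_family fam q -> exceeds4 fam C -> 4 < lin C q.
Proof.
case=> [[_ lo_le] le_hi] /andP[]; case: C => c0 c1; rewrite /lin /=.
by case: (fam_hi fam) le_hi => [h|] /= le_hi; have [|] := Z.le_gt_cases 0 c1; nia.
Qed.

Definition successors (fam : family) (st : state) : seq state :=
  let: State k dS dM a b a' b' := st in
  flatten [seq flatten [seq flatten [seq flatten [seq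
    [seq State K (k - dS) dS
             (block_letter ca) (block_letter cb) (block_letter ca') (block_letter cb')
      | K <- irange (-4) 4 &
        admits fam
          (shift (k - dM, k - dS) (block_hi ca) (block_lo cb) (block_lo ca') (block_hi cb'))
          (shift (k - dM, k - dS) (block_lo ca) (block_hi cb) (block_hi ca') (block_lo cb')) K]
    | cb' <- blocks b'] | ca' <- blocks a'] | cb <- blocks b] | ca <- blocks a].

Lemma successors_next fam (p : nat) st (r t r' t' : nat) (P : pred state) :
  (1 < p)%N -> in_family fam (Z.of_nat p) ->
  (r < size (phi_letter p (head1 st)))%N -> (t < size (phi_letter p (next1 st)))%N ->
  (r' < size (phi_letter p (head2 st)))%N -> (t' < size (phi_letter p (next2 st)))%N ->
  -4 <= len_diff (next_state p st r t r' t') <= 4 ->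
  all P (successors fam st) -> P (next_state p st r t r' t').
Proof.
move=> p_gt1 fam_p; case: st => k dS dM a b a' b'.
rewrite /next_state /successors; cbn [head1 next1 head2 next2 len_diff] => hr ht hr' ht' hK.
rewrite all_flatten_map => /(block_of p_gt1 hr) [ca [+ -> rca]]; cbv beta.
rewrite all_flatten_map => /(block_of p_gt1 ht) [cb [+ -> tcb]]; cbv beta.
rewrite all_flatten_map => /(block_of p_gt1 hr') [ca' [+ -> rca']]; cbv beta.
rewrite all_flatten_map => /(block_of p_gt1 ht') [cb' [+ -> tcb']]; cbv beta.
rewrite all_map all_filter => /allP /(_ _ (mem_irange hK)) /implyP; apply.
by apply: (admitsP fam_p); rewrite !lin_shift; move: hK rca tcb rca' tcb'; rewrite /lin /=; lia.
Qed.

Definition bounded (st : state) : bool :=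
  [&& (-4 <=? len_diff st) && (len_diff st <=? 4), (-3 <=? S_diff st) && (S_diff st <=? 3) &
      (-3 <=? M_diff st) && (M_diff st <=? 3)].

Definition letters : seq letter := [:: L; S; M].

Lemma mem_letters a : a \in letters.
Proof. by case: a. Qed.

Definition forall_bounded (P : pred state) : bool :=
  all (fun k => all (fun dS => all (fun dM =>
    all (fun a => all (fun b => all (fun a' => all (fun b' =>
      P (State k dS dM a b a' b')) letters) letters) letters) letters)
    (irange (-3) 3)) (irange (-3) 3)) (irange (-4) 4).

Lemma forall_boundedP P st : forall_bounded P -> bounded st -> P st.
Proof.
case: st => k dS dM a b a' b' + /and3P[hk hS hM].
have [{}hk {}hS {}hM] : [/\ -4 <= k <= 4, -3 <= dS <= 3 & -3 <= dM <= 3].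
  by move: hk hS hM => /= *; split; lia.
move=> /allP/(_ _ (mem_irange hk))/allP/(_ _ (mem_irange hS))/allP/(_ _ (mem_irange hM)).
move=> /allP/(_ _ (mem_letters a))/allP/(_ _ (mem_letters b)).
by move=> /allP/(_ _ (mem_letters a'))/allP/(_ _ (mem_letters b')).
Qed.

Definition state_key (st : state) : positive :=
  let digits := [:: Z.to_nat (len_diff st + 4); Z.to_nat (S_diff st + 3); Z.to_nat (M_diff st + 3);
                    letter_index (head1 st); letter_index (next1 st);
                    letter_index (head2 st); letter_index (next2 st)] in
  N.succ_pos (foldl (fun acc d => N.add (N.mul acc 9%num) (N.of_nat d)) N0 digits).

Definition state_in (I : PositiveSet.t) (st : state) : bool :=
  bounded st && PositiveSet.mem (state_key st) I.

Fixpoint words (k : nat) : seq (seq letter) :=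
  if k is k'.+1 then [seq a :: w | a <- letters, w <- words k'] else [:: [::]].

Lemma mem_words w : w \in words (size w).
Proof. by elim: w => [|a w IH]; [rewrite inE | exact: allpairs_f (mem_letters a) IH]. Qed.

Definition base_state (n n' : nat) (w w' : seq letter) : state :=
  State (Z.of_nat n - Z.of_nat n')
        (Z.of_nat (count isS (take n w)) - Z.of_nat (count isS (take n' w')))
        (Z.of_nat (count isM (take n w)) - Z.of_nat (count isM (take n' w')))
        (head L w) (nth L w n) (head L w') (nth L w' n').

Definition base_states : seq state :=
  let W := [seq w <- words 3 | sorted admissible w] in
  [seq base_state nn.1 nn.2 ww.1 ww.2
     | nn <- [seq (n, n') | n <- iota 0 3, n' <- iota 0 3], ww <- [seq (w, w') | w <- W, w' <- W]].

Definition insert_new (acc : PositiveSet.t * seq state) (st : state) :=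
  let: (seen, fresh) := acc in
  if PositiveSet.mem (state_key st) seen then acc
  else (PositiveSet.add (state_key st) seen, st :: fresh).

(* Breadth-first closure of the base states under [successors]; nothing is proved
   about it, its output is checked by [certifies] below. *)
Fixpoint saturate (fam : family) (fuel : nat) (seen : PositiveSet.t) (frontier : seq state) :=
  if fuel is fuel'.+1 then
    let next := flatten (map (successors fam) frontier) in
    let: (seen', fresh) := foldl insert_new (seen, [::]) next in
    if fresh is [::] then seen else saturate fam fuel' seen' fresh
  else seen.

Definition reachable (fam : family) : PositiveSet.t :=
  let: (seen, fresh) := foldl insert_new (PositiveSet.empty, [::]) base_states in
  saturate fam 100 seen fresh.

Definition image_size (a : letter) : Z * Z :=
  match a with L => (1, 1) | S => (1, 0) | M => (0, 1) end.

Lemma lin_image_size (p : nat) a :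
  (0 < p)%N -> lin (image_size a) (Z.of_nat p) = Z.of_nat (size (phi_letter p a)).
Proof.
by move=> p_gt0; rewrite (size_phi_letter p_gt0) /lin; case: a; cbn [image_size fst snd]; lia.
Qed.

(* Lower bound for the length difference of two factors whose preimages form a state of
   length difference 4 and the first preimage continues past the state's window. *)
Definition overshoot (st : state) : Z * Z :=
  shift (6 - M_diff st, 4 - S_diff st) (image_size (head1 st)) (image_size (next1 st)) (0, 0)
        (image_size (next2 st)).

Definition state_ok (fam : family) (I : PositiveSet.t) (st : state) : bool :=
  [&& all (state_in I) (successors fam st),
      (len_diff st =? 4) ==> exceeds4 fam (overshoot st) &
      (len_diff st =? 0) ==>
        [&& -2 <=? S_diff st, S_diff st <=? 2, -2 <=? M_diff st & M_diff st <=? 2]].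

(* [if] rather than [==>], which would compute [state_ok] for every bounded state. *)
Definition certifies (fam : family) (I : PositiveSet.t) : bool :=
  all (state_in I) base_states &&
  forall_bounded (fun st => if state_in I st then state_ok fam I st else true).

Definition family_of (p : nat) : family := if p == 2%N then Family 2 (Some 2) else Family 3 None.

Definition invariant2 : PositiveSet.t := Eval vm_compute in reachable (Family 2 (Some 2)).
Definition invariant3 : PositiveSet.t := Eval vm_compute in reachable (Family 3 None).
Definition invariant_of (p : nat) : PositiveSet.t := if p == 2%N then invariant2 else invariant3.

Lemma in_family_of (p : nat) : (1 < p)%N -> in_family (family_of p) (Z.of_nat p).
Proof. by rewrite /family_of /in_family; case: ifP => /= h; lia. Qed.

Lemma certifies_invariant (p : nat) : certifies (family_of p) (invariant_of p).
Proof. by rewrite /family_of /invariant_of; case: (p == 2%N); vm_compute. Qed.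

Section Balance.
Variables (p : nat) (fam : family) (I : PositiveSet.t).
Hypotheses (p_gt1 : (1 < p)%N) (p_fam : in_family fam (Z.of_nat p)) (certI : certifies fam I).

Lemma state_in_ok st : state_in I st -> state_ok fam I st.
Proof.
move=> st_in; have /andP[st_bd _] := st_in; case/andP: certI => _ all_ok.
by move: (forall_boundedP all_ok st_bd); rewrite st_in.
Qed.

Lemma state_of_base i n i' n' : (n < 3)%N -> (n' < 3)%N ->
  state_of p i n i' n' = base_state n n' (factor p i 3) (factor p i' 3).
Proof.
move=> hn hn'; rewrite /state_of /base_state.
rewrite -(factor_take _ _ (ltnW hn)) -(factor_take _ _ (ltnW hn')).
by rewrite !nth_factor // !(factor_cons p _ 2).
Qed.

Lemma state_in_base i n i' n' : (n < 3)%N -> (n' < 3)%N -> state_in I (state_of p i n i' n').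
Proof.
move=> hn hn'; case/andP: certI => /all_allpairsP base _.
rewrite state_of_base //; apply: (base (n, n') (factor p i 3, factor p i' 3)).
  by apply: allpairs_f; rewrite mem_iota.
have mem_W j : factor p j 3 \in [seq w <- words 3 | sorted admissible w].
  by rewrite mem_filter sorted_admissible_factor // -{2}(size_factor p j 3) mem_words.
exact: allpairs_f.
Qed.

Lemma state_in_next st r t r' t' : state_in I st ->
  (r < size (phi_letter p (head1 st)))%N -> (t < size (phi_letter p (next1 st)))%N ->
  (r' < size (phi_letter p (head2 st)))%N -> (t' < size (phi_letter p (next2 st)))%N ->
  -4 <= len_diff (next_state p st r t r' t') <= 4 -> state_in I (next_state p st r t r' t').
Proof. by move=> /state_in_ok/and3P[succ_in _ _] *; apply: successors_next succ_in. Qed.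

Lemma state_in_excess st : state_in I st -> len_diff st = 4 -> 4 < lin (overshoot st) (Z.of_nat p).
Proof.
move=> /state_in_ok/and3P[_ excess _] hk.
by apply: exceeds4P p_fam _; move: excess; rewrite hk.
Qed.

Lemma state_in_final st : state_in I st -> len_diff st = 0 ->
  -2 <= S_diff st <= 2 /\ -2 <= M_diff st <= 2.
Proof.
move=> /state_in_ok/and3P[_ _ final] hk; move: final; rewrite hk /=.
by case/and4P => /Z.leb_le ? /Z.leb_le ? /Z.leb_le ? /Z.leb_le ?; do !split.
Qed.

(* Otherwise the prefix of length m' + 4 of the first preimage already makes the first
   factor more than 4 letters longer than the second. *)
Lemma desubst_len_le i n j m r t i' n' j' m' r' t' :
  (forall i n i' n', (n + n' < m + m')%N -> -4 <= Z.of_nat n - Z.of_nat n' <= 4 ->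
     state_in I (state_of p i n i' n')) ->
  desubst p i n j m r t -> desubst p i' n' j' m' r' t' -> Z.of_nat n - Z.of_nat n' <= 4 ->
  (m <= m' + 4)%N.
Proof.
move=> IH d d' hk; rewrite leqNgt; apply/negP => long.
have p_gt0 := ltnW p_gt1.
have := state_in_excess (IH j (m' + 4)%N j' m' _ _).
rewrite /overshoot /state_of; cbn [len_diff S_diff M_diff head1 next1 head2 next2].
rewrite lin_shift !lin_image_size // /lin; cbn [fst snd].
have := desubst_size p_gt1 d; have := desubst_size p_gt1 d'.
have := size_phi p_gt1 (factor p j (m' + 4)); have := size_phi p_gt1 (factor p j' m').
have := size_phi_factor_lt p j long; rewrite !size_factor.
case: d d' => _ hr _ _ [_ _ _ ht']; lia.
Qed.

Lemma state_in_state_of i n i' n' : -4 <= Z.of_nat n - Z.of_nat n' <= 4 ->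
  state_in I (state_of p i n i' n').
Proof.
have [N] := ubnP (n + n'); elim: N i n i' n' => // N IH i n i' n' /ltnSE hN hk.
have [/andP[hn hn'] | long] := boolP ((n < 3) && (n' < 3))%N; first exact: state_in_base.
have [j [m [r [t d]]]] := desubst_exists p_gt1 i n.
have [j' [m' [r' [t' d']]]] := desubst_exists p_gt1 i' n'.
have [m_le m_lt] := desubst_shorter p_gt1 d; have [m'_le m'_lt] := desubst_shorter p_gt1 d'.
have shorter : (m + m' < n + n')%N by move: long; rewrite negb_and -!leqNgt; case/orP; lia.
have IHm i1 n1 i1' n1' : (n1 + n1' < m + m')%N -> -4 <= Z.of_nat n1 - Z.of_nat n1' <= 4 ->
    state_in I (state_of p i1 n1 i1' n1') by move=> ?; apply: IH; lia.
have m_m' : (m <= m' + 4)%N by apply: (desubst_len_le IHm d d'); lia.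
have m'_m : (m' <= m + 4)%N.
  by apply: (desubst_len_le _ d' d) => [i1 n1 i1' n1' ? ?|]; [apply: IHm; lia | lia].
rewrite (state_of_desubst p_gt1 d d'); case: (d) (d') => _ hr _ ht [_ hr' _ ht'].
apply: state_in_next => //; first by apply: IH; lia.
by rewrite -(state_of_desubst p_gt1 d d').
Qed.

End Balance.

Lemma balanced_counts p n i i' : (1 < p)%N ->
  (count isS (factor p i n) <= count isS (factor p i' n) + 2)%N /\
  (count isM (factor p i n) <= count isM (factor p i' n) + 2)%N.
Proof.
move=> p_gt1; have cert := certifies_invariant p; have fam_p := in_family_of p_gt1.
have st_in : state_in (invariant_of p) (state_of p i n i' n).
  by apply: (state_in_state_of p_gt1 fam_p cert); lia.
by have /= := state_in_final cert st_in; lia.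
Qed.

Local Close Scope Z_scope.

Section PsiList.
Local Open Scope ring_scope.

Lemma Psi_listE n s m : Psi_list n s m =
  [seq (n%:Z - s%:Z - m%:Z - a - b, s%:Z + a, m%:Z + b) | a <- [:: -1; 0; 1], b <- [:: -1; 0; 1]].
Proof. by rewrite /Psi_list /=; do 9 (congr (_ :: _); first by congr (_, _, _); lia). Qed.

Lemma mem_Psi_list n s m cL cS cM : (cL + cS + cM = n)%N ->
  (s <= cS + 1 <= s + 2)%N -> (m <= cM + 1 <= m + 2)%N ->
  (cL%:Z, cS%:Z, cM%:Z) \in Psi_list n s m.
Proof.
move=> hn hs hm; rewrite Psi_listE; apply/allpairsP.
by exists (cS%:Z - s%:Z, cM%:Z - m%:Z); rewrite /= !inE; split; [lia | lia | congr (_, _, _); lia].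
Qed.

End PsiList.

Lemma spread2_window (f : nat -> nat) : (forall i j, f i <= f j + 2) ->
  exists c, forall i, c <= f i + 1 <= c + 2.
Proof.
move=> f2; have f20 i : f i <= f 0 + 2 /\ f 0 <= f i + 2 := conj (f2 i 0) (f2 0 i).
have [[j lo_j] | no_lo] := classic (exists j, f j + 2 = f 0).
  by exists (f 0 - 1) => i; have := f2 i j; have := f20 i; lia.
have [[j hi_j] | no_hi] := classic (exists j, f j = f 0 + 2).
  by exists (f 0 + 1) => i; have := f2 j i; have := f20 i; lia.
exists (f 0) => i; have := f20 i.
have : f i + 2 <> f 0 by move=> E; apply: no_lo; exists i.
have : f i <> f 0 + 2 by move=> E; apply: no_hi; exists i.
lia.
Qed.

Lemma count_letters (w : seq letter) : count isL w + count isS w + count isM w = size w.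
Proof. by elim: w => //= a w IH; case: a => /=; lia. Qed.

Theorem proposition8p1 (p : nat) (hp : (1 < p)%N) (n : nat) :
  (exists s_n m_n : nat, forall v, Pu p n v -> v \in Psi_list n s_n m_n) /\
  card_le (Pu p n) 9.
Proof.
have [s Hs] := spread2_window (fun i j => (balanced_counts n i j hp).1).
have [m Hm] := spread2_window (fun i j => (balanced_counts n i j hp).2).
have Pu_Psi v : Pu p n v -> v \in Psi_list n s m.
  by case=> i <-; apply: mem_Psi_list; rewrite ?count_letters ?size_factor.
by split; [exists s, m | exists (Psi_list n s m)].
Qed.
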